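(* Let $\mathcal{R}$ be a set of nontrivial rules on a finite set $Q$, and let $\mathcal{C}=\{(A\cup\{q\},q): (A,q)\in\mathcal{R}\}$. Then $\mathcal{A}(\mathcal{R})=\mathcal{L}(\mathcal{C})$.
   Context: A rule on $Q$ is a pair $(A,q)$ with $A\subseteq Q$, $q\in Q$; it is nontrivial if $q\notin A$. It accepts $X\subseteq Q$ if $q\in X$ implies $X\cap A\neq\emptyset$. $\mathcal{K}(\mathcal{R})$ is the family of subsets of $Q$ accepted by all rules of $\mathcal{R}$, and $\mathcal{A}(\mathcal{R})$ is the family of $K\in\mathcal{K}(\mathcal{R})$ for which there is a sequence $\emptyset=Y_0\subseteq Y_1\subseteq\dots\subseteq Y_k=K$ of members of $\mathcal{K}(\mathcal{R})$ with $|Y_{i+1}\setminus Y_i|=1$ for all $i$. A rooted set is a pair $(C,r)$ with $C\subseteq Q$ and $r\in C$. For a family $\mathcal{C}$ of rooted sets, $\mathcal{L}(\mathcal{C})$ is the family of subsets $X\subseteq Q$ admitting an ordering $x_1,\dots,x_k$ of the elements of $X$ such that for each $i$, whenever $(C,x_i)\in\mathcal{C}$ one has $C\cap\{x_1,\dots,x_{i-1}\}\neq\emptyset$. *)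

From mathcomp Require Import all_boot all_order.
Set Implicit Arguments. Unset Strict Implicit. Unset Printing Implicit Defensive.

Definition rule (Q : finType) := ({set Q} * Q)%type.

Definition nontrivial (Q : finType) (r : rule Q) : bool := r.2 \notin r.1.

Definition accepts (Q : finType) (r : rule Q) (X : {set Q}) : bool :=
  (r.2 \in X) ==> (X :&: r.1 != set0).

Definition Kfam (Q : finType) (R : {set rule Q}) : {set {set Q}} :=
  [set X : {set Q} | [forall r in R, accepts r X]].

(* A(R): members K of K(R) reachable from the empty set by a chain
   Y_0 = set0 ⊆ Y_1 ⊆ ... ⊆ Y_k = K of members of K(R), each step adding
   exactly one element. The chain is the list [Y_0; ...; Y_k]. *)
Definition accessible_chain (Q : finType) (R : {set rule Q}) (K : {set Q})
    (Ys : seq {set Q}) : Prop :=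
  [/\ head set0 Ys = set0, last set0 Ys = K, Ys != [::],
      all (fun Y => Y \in Kfam R) Ys &
      path (fun Y Y' : {set Q} => (Y \subset Y') && (#|Y' :\: Y| == 1)) (head set0 Ys) (behead Ys)].

Definition in_A (Q : finType) (R : {set rule Q}) (K : {set Q}) : Prop :=
  K \in Kfam R /\ exists Ys, accessible_chain R K Ys.

Definition rooted (Q : finType) (c : {set Q} * Q) : bool := c.2 \in c.1.

(* L(C): sets X admitting an ordering x_1..x_k (a duplicate-free list
   enumerating X) such that for each i, every (C, x_i) in C meets
   {x_1, ..., x_{i-1}}. *)
Definition good_ordering (Q : finType) (Cf : {set {set Q} * Q}) (s : seq Q) : Prop :=
  forall i, i < size s ->
    forall c, c \in Cf -> c.2 = nth c.2 s i ->
      c.1 :&: [set x in take i s] != set0.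

Definition in_L (Q : finType) (Cf : {set {set Q} * Q}) (X : {set Q}) : Prop :=
  exists s : seq Q, [/\ uniq s, [set x in s] = X & good_ordering Cf s].

Definition C_of (Q : finType) (R : {set rule Q}) : {set {set Q} * Q} :=
  [set (r.1 :|: [set r.2], r.2) | r in R].

From mathcomp Require Import all_boot all_order.

Set Implicit Arguments. Unset Strict Implicit. Unset Printing Implicit Defensive.

(* Both [A(R)] and [L(C)] are built by adding one element [x] at a time to a
   set [Y] (a member of the chain, resp. the prefix of the ordering), and the
   two admissibility conditions for such a step coincide: for [Y] in [K(R)]
   and [x \notin Y], the set [x |: Y] is accepted by every rule iff every
   rooted set [(A :|: [set q], q)] of [C] with root [q = x] meets [Y].
   Nontriviality is needed in one direction only, to exclude that the
   witness meeting [A :|: [set x]] is the root [x] itself. *)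

Definition add_step (Q : finType) (Y Y' : {set Q}) : bool :=
  (Y \subset Y') && (#|Y' :\: Y| == 1).

Definition meets_rooted_at (Q : finType) (Cf : {set {set Q} * Q})
    (Y : {set Q}) (x : Q) : Prop :=
  forall c, c \in Cf -> c.2 = x -> c.1 :&: Y != set0.

Section Sets.

Variable Q : finType.
Implicit Types (Y : {set Q}) (s : seq Q) (x : Q).

Lemma add_stepP Y Y' :
  reflect (exists2 x, x \notin Y & Y' = x |: Y) (add_step Y Y').
Proof.
apply: (iffP andP) => [[sYY' /cards1P [x eD]] | [x xY ->]].
  have xD : x \in Y' :\: Y by rewrite eD set11.
  exists x; first by move: xD; rewrite inE => /andP [].
  apply/setP => z; move/setP/(_ z): eD; rewrite !inE.
  case: (boolP (z \in Y)) => [zY _ | _ /= ->]; last by rewrite orbF.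
  by rewrite orbT (subsetP sYY').
split; first exact: subsetUr.
apply/cards1P; exists x; apply/setP => z; rewrite !inE.
by case: eqP => [-> | _] //=; rewrite ?xY ?andNb.
Qed.

Lemma set_rcons s x : [set z in rcons s x] = x |: [set z in s].
Proof. by apply/setP => z; rewrite !inE mem_rcons in_cons. Qed.

End Sets.

Lemma good_ordering_rcons (Q : finType) (Cf : {set {set Q} * Q}) s x :
  good_ordering Cf (rcons s x) <->
  good_ordering Cf s /\ meets_rooted_at Cf [set z in s] x.
Proof.
have take_rcons i : i <= size s -> take i (rcons s x) = take i s.
  by move=> le_i_s; rewrite -cats1 takel_cat.
split => [g | [g gx] i].
  split=> [i lt_i_s c cC ci | c cC cx].
    rewrite -take_rcons ?(ltnW lt_i_s) //; apply: g; rewrite ?nth_rcons ?lt_i_s //.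
    by rewrite size_rcons ltnS ltnW.
  have := g (size s); rewrite size_rcons ltnS leqnn take_rcons // take_size.
  by apply => //; rewrite nth_rcons ltnn eqxx.
rewrite size_rcons ltnS leq_eqVlt => /orP [/eqP -> | lt_i_s] c cC.
  by rewrite nth_rcons ltnn eqxx take_rcons // take_size; apply: gx.
by rewrite nth_rcons lt_i_s take_rcons ?(ltnW lt_i_s) //; apply: g.
Qed.

Section Rules.

Variables (Q : finType) (R : {set rule Q}).
Implicit Types (Y : {set Q}) (x : Q).

Lemma set0_in_Kfam : set0 \in Kfam R.
Proof. by rewrite inE; apply/forall_inP => r _; rewrite /accepts inE. Qed.

Lemma Kfam_setU1 Y x :
  Y \in Kfam R -> x \notin Y -> meets_rooted_at (C_of R) Y x -> x |: Y \in Kfam R.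
Proof.
move=> /[!inE] /forall_inP KY xY meetY; apply/forall_inP => r rR.
apply/implyP; rewrite in_setU1 => /orP [/eqP rx | rY].
  have /set0Pn [y] := meetY _ (imset_f _ rR) rx.
  rewrite /= !inE rx => /andP [/orP [yA | /eqP yx] yY]; last by rewrite -yx yY in xY.
  by apply/set0Pn; exists y; rewrite !inE yY yA orbT.
have /set0Pn [y] := implyP (KY r rR) rY.
by rewrite inE => /andP [yY yA]; apply/set0Pn; exists y; rewrite !inE yY yA orbT.
Qed.

Lemma good_ordering_Kfam s :
  uniq s -> good_ordering (C_of R) s -> [set z in s] \in Kfam R.
Proof.
elim/last_ind: s => [|s x IH]; first by rewrite set_nil set0_in_Kfam.
rewrite rcons_uniq set_rcons => /andP [xs us] /good_ordering_rcons [g gx].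
by apply: Kfam_setU1 => //; [apply: IH | rewrite inE].
Qed.

Lemma good_ordering_chain s :
  uniq s -> good_ordering (C_of R) s -> exists Ys, accessible_chain R [set z in s] Ys.
Proof.
elim/last_ind: s => [|s x IH] us g.
  by exists [:: set0]; split; rewrite //= ?set_nil ?set0_in_Kfam.
have [xs us'] : x \notin s /\ uniq s by apply/andP; rewrite -rcons_uniq.
have [gs _] := (good_ordering_rcons _ _ _).1 g.
have [[|Y0 t] [h l ne a p]] := IH us' gs; first by rewrite eqxx in ne.
move: h l a p => /= h l /andP [KY0 a] p.
exists (Y0 :: rcons t [set z in rcons s x]); split => //=.
- by rewrite last_rcons.
- by rewrite KY0 all_rcons a good_ordering_Kfam.
rewrite rcons_path p -/(add_step _ _) l set_rcons.
by apply/add_stepP; exists x; rewrite ?inE.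
Qed.

Hypothesis R_nontrivial : forall r, r \in R -> nontrivial r.

Lemma Kfam_setU1_meets Y x :
  x \notin Y -> x |: Y \in Kfam R -> meets_rooted_at (C_of R) Y x.
Proof.
move=> xY /[!inE] /forall_inP KxY c /imsetP [r rR ->] /= rx.
have /implyP := KxY r rR; rewrite rx setU11 => /(_ isT) /set0Pn [y].
rewrite !inE => /andP [/orP [/eqP yx | yY] yA].
  by have := R_nontrivial rR; rewrite /nontrivial rx -yx yA.
by apply/set0Pn; exists y; rewrite !inE yA yY.
Qed.

Lemma chain_in_L (t : seq {set Q}) :
  path (@add_step Q) set0 t -> all (fun Y => Y \in Kfam R) t ->
  in_L (C_of R) (last set0 t).
Proof.
elim/last_ind: t => [|t Y' IH]; first by exists [::]; rewrite set_nil.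
rewrite rcons_path all_rcons last_rcons => /andP [p /add_stepP [x xY ->]].
case/andP=> KxY /(IH p) [s [us es g]].
exists (rcons s x); split.
- by rewrite rcons_uniq us andbT -es inE in xY *.
- by rewrite set_rcons es.
apply/good_ordering_rcons; split=> //; rewrite es.
exact: Kfam_setU1_meets.
Qed.

Lemma accessible_chain_in_L X Ys : accessible_chain R X Ys -> in_L (C_of R) X.
Proof.
case: Ys => [|Y0 t] [h <- ne a p] //.
move: h a p => /= -> /andP [_ a] p.
exact: chain_in_L.
Qed.

End Rules.

Theorem theorem2p4 (Q : finType) (R : {set rule Q}) :
  (forall r, r \in R -> nontrivial r) ->
  forall X : {set Q}, in_A R X <-> in_L (C_of R) X.
Proof.
move=> R_nontrivial X; split=> [[_ [Ys]] | [s [us <- g]]].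
  exact: accessible_chain_in_L.
by split; [apply: good_ordering_Kfam | apply: good_ordering_chain].
Qed.
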